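(* Let $\mu$ be a strict partition with $\mu_1\ge2$. Then $D(\mu)$ consists precisely of those partitions $\alpha$ with exactly $\mu_1-1$ distinct positive part sizes whose rectangular decomposition $x_1y_1+\cdots+x_{\mu_1-1}y_{\mu_1-1}$ satisfies $x_i=1$ for every $i\in\{1,\ldots,\mu_1-1\}$ such that $\mu$ has no part of size $i$.
   Context: A partition is a weakly decreasing sequence of nonnegative integers with finitely many nonzero parts, identified with its Ferrers board. $\alpha$ contains $\mu$ if one can delete some rows and some columns of the Ferrers board of $\alpha$ so that after top/left-justifying one obtains $\mu$; otherwise $\alpha$ avoids $\mu$. Strict: positive parts distinct. If $\alpha$ has exactly $k$ distinct positive part sizes, its Ferrers board is uniquely the horizontal concatenation of $k$ rectangles with widths $x_1,\ldots,x_k>0$ and strictly decreasing heights $y_1>\cdots>y_k>0$ (i.e. $\alpha$ has exactly $x_i$ columns of length $y_i$), so $|\alpha|=\sum x_iy_i$; this is the rectangular decomposition of $\alpha$. For strict $\mu$, $D_n(\mu)$ is the set of partitions of weight $n>0$ avoiding $\mu$ with exactly $\mu_1-1$ distinct positive part sizes, $D_0(\mu)=\emptyset$, and $D(\mu)=\bigcup_n D_n(\mu)$. *)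

From mathcomp Require Import all_boot.
Set Implicit Arguments. Unset Strict Implicit. Unset Printing Implicit Defensive.

Definition is_partition (a : seq nat) : bool :=
  sorted geq a && all (fun x => 0 < x) a.

Definition is_strict (m : seq nat) : bool :=
  sorted (fun x y => y < x) m && all (fun x => 0 < x) m.

Definition weight (a : seq nat) : nat := sumn a.

(* Containment: delete the rows not selected by the row mask [r] and the
   columns not selected by the column mask [c]; after top/left-justifying,
   a kept row of length x has  count id (take x c)  cells; empty rows
   disappear. *)
Definition contains (a mu : seq nat) : Prop :=
  exists (r c : bitseq),
    [seq n <- [seq count id (take x c) | x <- mask r a] | 0 < n] = mu.

Definition avoids (a mu : seq nat) : Prop := ~ contains a mu.

Definition ndistinct (a : seq nat) : nat := size (undup [seq x <- a | 0 < x]).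

Definition conj_part (a : seq nat) : seq nat :=
  mkseq (fun j => count (fun x => j < x) a) (head 0 a).

(* rectangular decomposition: heights y_1 > ... > y_k are the distinct column
   lengths, and x_i is the number of columns of length y_i (1-indexed i). *)
Definition rect_y (a : seq nat) (i : nat) : nat := nth 0 (undup (conj_part a)) i.-1.
Definition rect_x (a : seq nat) (i : nat) : nat := count_mem (rect_y a i) (conj_part a).

Definition mu1 (mu : seq nat) : nat := head 0 mu.

Definition in_D (mu a : seq nat) : Prop :=
  [/\ is_partition a, 0 < weight a, avoids a mu & ndistinct a = (mu1 mu).-1].

From mathcomp Require Import all_boot zify.
Set Implicit Arguments. Unset Strict Implicit. Unset Printing Implicit Defensive.

(* Let 0 = s_0 < s_1 < ... < s_k be 0 followed by the distinct part sizes of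
   a partition a (its "levels").  Column j of a has length #{parts > j},
   which is constant between consecutive levels and strictly decreasing from
   one such interval to the next; hence the conjugate partition is a sequence
   of k constant blocks and the rectangle widths are x_i = s_i - s_(i-1)
   (lemma [rect_x_levels]).  A column mask c turns a row of length x into a
   row of length [kept c x], a nondecreasing, 1-Lipschitz function of x.
   Assume a has k = mu_1 - 1 distinct parts.
   - If x_i = 1 whenever i is not a part of mu, then a avoids mu
     ([avoids_of_narrow]): for a realization of mu, let i be the first index
     with kept length g(s_i) > i; the jump forces x_i >= 2, so i is a part of
     mu, yet no level has kept length exactly i.
   - If x_i >= 2 for some i that is not a part of mu, then a contains mu
     ([contains_of_wide]): keeping the last column of every rectangle and the
     second-to-last column of the i-th one gives kept lengths g(s_j) =
     j + [i <= j], which take every value of {1, ..., k+1} except i, hence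
     every part of mu. *)

Lemma geq_trans : transitive geq.
Proof. by move=> n m p le_nm le_mp; apply: leq_trans le_mp le_nm. Qed.

Lemma gtn_trans : transitive gtn.
Proof. by move=> n m p lt_mn lt_pm; apply: ltn_trans lt_pm lt_mn. Qed.

Lemma find_switch (P : pred nat) k : P 0 -> ~~ P k ->
  exists i, [/\ 0 < i <= k, P i.-1 & ~~ P i].
Proof.
move=> P0; elim: k => [|k IHk] Pk; first by rewrite P0 in Pk.
case Pk' : (P k); first by exists k.+1; rewrite Pk' Pk ltnS leqnn.
have [i [/andP[i_gt0 le_ik] Pi' nPi]] := IHk (negbT Pk').
by exists i; rewrite i_gt0 Pi' nPi (leq_trans le_ik).
Qed.

Lemma count_le_nth_sorted (s : seq nat) j : sorted ltn s -> j < size s ->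
  count (fun v => v <= nth 0 s j) s = j.+1.
Proof.
elim: s j => // x s IHs j x_s; have x_min := order_path_min ltn_trans x_s.
case: j => [|j] /= lt_j.
  rewrite leqnn add1n; congr succn; apply/eqP; rewrite -leqn0 leqNgt -has_count.
  by apply/hasPn => v v_s; rewrite -ltnNge (allP x_min v v_s).
have /ltnW -> : x < nth 0 s j by apply: (allP x_min); rewrite mem_nth.
by rewrite IHs // (path_sorted x_s).
Qed.

Lemma count_succ_mem (t : seq nat) n : all (fun v => 0 < v) t -> uniq t ->
  count (fun p => p.+1 \in t) (iota 0 n) = count (fun v => v <= n) t.
Proof.
move=> t_pos t_uniq; elim: n => [|n IHn].
  apply/esym/eqP; rewrite -leqn0 leqNgt -has_count.
  by apply/hasPn => v v_t; rewrite -ltnNge (allP t_pos v v_t).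
rewrite -addn1 iotaD count_cat IHn /= add0n addn0 addn1 -(count_uniq_mem n.+1 t_uniq).
rewrite -count_predUI (@eq_count _ (predI _ _) pred0) ?count_pred0 ?addn0.
  by apply: eq_count => v /=; rewrite (leq_eqVlt v n.+1) ltnS orbC.
by move=> v /=; case: eqP => [-> |]; rewrite ?ltnn ?andbF.
Qed.

Lemma undup_nseq (T : eqType) n (x : T) : 0 < n -> undup (nseq n x) = [:: x].
Proof.
case: n => // n _; elim: n => // n IHn.
by rewrite [undup _]/= mem_head; exact: IHn.
Qed.

Section Blocks.
Variables (T : eqType) (v : nat -> T) (d : nat -> nat).

Definition blocks (k : nat) : seq T := flatten [seq nseq (d i) (v i) | i <- iota 0 k].

Lemma blocks_rcons k : blocks k.+1 = blocks k ++ nseq (d k) (v k).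
Proof. by rewrite /blocks -addn1 iotaD map_cat flatten_cat /= cats0. Qed.

Lemma map_iota_rcons k : map v (iota 0 k.+1) = rcons (map v (iota 0 k)) (v k).
Proof. by rewrite -addn1 iotaD map_cat cats1. Qed.

Lemma blocks_sub k : {subset blocks k <= map v (iota 0 k)}.
Proof.
elim: k => [|k IHk] // x; rewrite blocks_rcons map_iota_rcons mem_rcons in_cons mem_cat.
by case/orP=> [/IHk->|]; rewrite ?orbT // mem_nseq => /andP[_ ->].
Qed.

Lemma undup_blocks k : (forall i, i < k -> 0 < d i) -> uniq (map v (iota 0 k)) ->
  undup (blocks k) = map v (iota 0 k).
Proof.
elim: k => [|k IHk] // d_gt0; rewrite map_iota_rcons rcons_uniq => /andP[vk_new uniq_v].
have d_gt0_k i : i < k -> 0 < d i by move/ltnW/d_gt0.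
rewrite blocks_rcons undup_cat undup_nseq ?d_gt0 // IHk // cats1.
congr rcons; apply/all_filterP/allP => x x_old.
rewrite mem_nseq negb_and; apply/orP; right.
by apply/eqP => x_vk; rewrite -x_vk x_old in vk_new.
Qed.

Lemma count_blocks k j : j < k -> uniq (map v (iota 0 k)) ->
  count_mem (v j) (blocks k) = d j.
Proof.
elim: k => [|k IHk] // lt_jk1; rewrite map_iota_rcons rcons_uniq => /andP[vk_new uniq_v].
rewrite blocks_rcons count_cat count_nseq /=.
have [->|ne_jk] := eqVneq j k.
  rewrite eqxx mul1n (count_memPn _) //.
  by apply: contra vk_new => /blocks_sub.
have lt_jk : j < k by rewrite ltn_neqAle ne_jk -ltnS.
rewrite IHk // [v k == _](_ : _ = false) ?addn0 //.
by apply: contraNF vk_new => /eqP->; rewrite map_f // mem_iota.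
Qed.

End Blocks.

Lemma map_iota_blocks (T : eqType) (f : nat -> T) (b : nat -> nat) k :
  b 0 = 0 -> (forall i, i < k -> b i <= b i.+1) ->
  (forall i j, i < k -> b i <= j < b i.+1 -> f j = f (b i)) ->
  map f (iota 0 (b k)) = blocks (fun i => f (b i)) (fun i => b i.+1 - b i) k.
Proof.
elim: k => [|k IHk] b0 b_mono f_const; first by rewrite b0.
have IH := IHk b0 (fun i lt_ik => b_mono i (ltnW lt_ik))
  (fun i j lt_ik => f_const i j (ltnW lt_ik)).
rewrite blocks_rcons -IH -{1}(subnKC (b_mono k (ltnSn k))) iotaD map_cat add0n.
congr (_ ++ _).
have /all_pred1P -> : all (pred1 (f (b k))) (map f (iota (b k) (b k.+1 - b k))).
  apply/allP => y /mapP[j]; rewrite mem_iota subnKC ?b_mono // => j_in ->.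
  by rewrite /= (f_const k j).
by rewrite size_map size_iota.
Qed.

Definition levels (a : seq nat) : seq nat := 0 :: rev (undup a).

Section Levels.
Variable a : seq nat.
Hypothesis a_part : is_partition a.
Local Notation k := (size (undup a)).
Local Notation lev := (nth 0 (levels a)).

Lemma part_gt0 z : z \in a -> 0 < z.
Proof. by case/andP: a_part => _ /allP; apply. Qed.

Lemma part_le_head z : z \in a -> z <= head 0 a.
Proof.
case/andP: a_part => + _; case: (a) => //= x s x_s.
by rewrite in_cons => /predU1P[-> // | /(allP (order_path_min geq_trans x_s))].
Qed.

Lemma ndistinct_levels : ndistinct a = k.
Proof. by case/andP: a_part => _ a_pos; rewrite /ndistinct (all_filterP a_pos). Qed.

Lemma levels_sorted : sorted ltn (levels a).
Proof.
rewrite /levels /= path_sortedE; last exact: ltn_trans.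
apply/andP; split.
  by apply/allP => z; rewrite mem_rev mem_undup; apply: part_gt0.
rewrite rev_sorted gtn_sorted_uniq_geq undup_uniq /=.
by apply: (subseq_sorted geq_trans (undup_subseq a)); case/andP: a_part.
Qed.

Lemma lev_leq : {in [pred j | j <= k] &, {mono lev : i j / i <= j}}.
Proof.
apply: leq_mono_in => i j i_k j_k.
by apply: (sorted_ltn_nth ltn_trans 0 levels_sorted); rewrite inE /levels /= size_rev ltnS.
Qed.

Lemma lev_ltn : {in [pred j | j <= k] &, {mono lev : i j / i < j}}.
Proof. exact: leqW_mono_in lev_leq. Qed.

Lemma lev_in_part j : 0 < j <= k -> lev j \in a.
Proof.
case: j => // j; rewrite ltnS /= => lt_jk.
by rewrite -mem_undup -mem_rev mem_nth // size_rev.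
Qed.

Lemma part_is_lev z : z \in a -> exists2 j, 0 < j <= k & lev j = z.
Proof.
rewrite -mem_undup -mem_rev => z_a; exists (index z (rev (undup a))).+1.
  by rewrite /= -(size_rev (undup a)) index_mem.
by rewrite /= nth_index.
Qed.

Lemma lev_top : lev k = head 0 a.
Proof.
have [-> // | a_ne] := eqVneq a [::].
have head_a : head 0 a \in a by case: (a) a_ne => //= x s _; rewrite mem_head.
have [j /andP[j_gt0 le_jk] lev_j] := part_is_lev head_a.
apply/eqP; rewrite eqn_leq part_le_head ?lev_in_part ?(leq_trans j_gt0) //=.
by rewrite -lev_j lev_leq ?inE.
Qed.

Definition col_height (i : nat) : nat := count (fun x => lev i < x) a.

(* Column [j] of [a] has length [count (fun x => j < x) a], which is constant
   on each interval between consecutive levels: the conjugate partition is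
   made of [k] blocks of columns, the [i]-th of width [s_(i+1) - s_i]. *)
Lemma conj_part_blocks :
  conj_part a = blocks col_height (fun i => lev i.+1 - lev i) k.
Proof.
rewrite /conj_part /mkseq -lev_top; apply: map_iota_blocks => // i.
  by move=> lt_ik; rewrite lev_leq ?inE // ltnW.
move=> j lt_ik /andP[le_ij lt_ji]; apply: eq_in_count => x x_a.
have [m /andP[_ le_mk] <-] := part_is_lev x_a.
have le_ik := ltnW lt_ik.
rewrite lev_ltn ?inE //; case: (ltnP i m) => [lt_im | le_mi].
  by apply: leq_trans lt_ji _; rewrite lev_leq.
by apply/negbTE; rewrite -leqNgt (leq_trans _ le_ij) // lev_leq.
Qed.

(* Successive column heights strictly decrease, since the parts equal to the
   [j]-th level are counted by [col_height i] for [i < j] but not by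
   [col_height j]. *)
Lemma col_height_decr i j : i < j <= k -> col_height j < col_height i.
Proof.
case/andP=> lt_ij le_jk; have le_ik := ltnW (leq_trans lt_ij le_jk).
have sub_ij x : lev j < x -> lev i < x.
  by apply: leq_trans; rewrite ltnS lev_leq ?inE // ltnW.
rewrite /col_height -(eq_count (fun x => andb_idr (@sub_ij x))) -count_filter.
rewrite -[X in _ < X]size_filter ltn_neqAle count_size andbT -all_count.
apply/allPn; exists (lev j); last by rewrite ltnn.
by rewrite mem_filter lev_ltn ?inE // lt_ij lev_in_part ?le_jk ?(leq_ltn_trans _ lt_ij).
Qed.

Lemma rect_x_levels i : 0 < i <= k -> rect_x a i = lev i - lev i.-1.
Proof.
case/andP=> i_gt0 le_ik; have lt_ik : i.-1 < k by rewrite prednK.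
have widths_gt0 j : j < k -> 0 < lev j.+1 - lev j.
  by move=> lt_jk; rewrite subn_gt0 lev_ltn ?inE // ltnW.
have heights_uniq : uniq (map col_height (iota 0 k)).
  rewrite map_inj_in_uniq ?iota_uniq // => j1 j2.
  rewrite !mem_iota !add0n /= => /ltnW le_j1 /ltnW le_j2 eq_h.
  case: (ltngtP j1 j2) => // [lt_12 | lt_21].
    by move: (@col_height_decr j1 j2); rewrite eq_h ltnn lt_12 le_j2 => /(_ isT).
  by move: (@col_height_decr j2 j1); rewrite eq_h ltnn lt_21 le_j1 => /(_ isT).
rewrite /rect_x /rect_y conj_part_blocks undup_blocks // (nth_map 0) ?size_iota //.
by rewrite nth_iota // count_blocks // prednK.
Qed.

End Levels.

Lemma strict_is_partition mu : is_strict mu -> is_partition mu.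
Proof.
case/andP=> mu_sorted mu_pos; rewrite /is_partition mu_pos andbT.
by apply: sub_sorted mu_sorted => x y /ltnW.
Qed.

Lemma weight_gt0 a : is_partition a -> 0 < ndistinct a -> 0 < weight a.
Proof.
case: a => [|x s] // a_part _; rewrite /weight /=.
by rewrite (leq_trans (part_gt0 a_part (mem_head x s))) ?leq_addr.
Qed.

Definition kept (c : bitseq) (x : nat) : nat := count id (take x c).

Lemma kept_mono c : {homo kept c : x y / x <= y}.
Proof. by move=> x y le_xy; rewrite /kept -(subnKC le_xy) takeD count_cat leq_addr. Qed.

Lemma kept_lipschitz c x y : x <= y -> kept c y <= kept c x + (y - x).
Proof.
move=> le_xy; rewrite /kept -{1}(subnKC le_xy) takeD count_cat leq_add2l.
by apply: leq_trans (count_size _ _) _; rewrite size_take_min geq_minl.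
Qed.

Lemma contains_levels a mu : is_partition a -> contains a mu ->
  exists c, forall v, v \in mu ->
    exists2 j, 0 < j <= size (undup a) & kept c (nth 0 (levels a) j) = v.
Proof.
move=> a_part [r [c c_mu]]; exists c => v; rewrite -c_mu mem_filter.
case/andP=> _ /mapP[z /mem_mask z_a ->].
by have [j j_range <-] := part_is_lev z_a; exists j.
Qed.

(* Otherwise pick the
   first index [i] at which the kept level [g i] exceeds [i]; the jump at [i]
   forces [x_i >= 2], hence [i] is a part of [mu], but no level is kept with
   length exactly [i]. *)
Lemma avoids_of_narrow a mu : is_partition a -> mu1 mu = (size (undup a)).+1 ->
  (forall i, 0 < i <= size (undup a) -> i \notin mu -> rect_x a i = 1) ->
  avoids a mu.
Proof.
move=> a_part mu1_k narrow; rewrite /avoids => /(contains_levels a_part)[c mu_kept].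
set k := size (undup a) in mu1_k narrow mu_kept.
pose g j := kept c (nth 0 (levels a) j).
have g_mono i j : i <= j <= k -> g i <= g j.
  by case/andP=> le_ij le_jk; apply/kept_mono; rewrite (lev_leq a_part) ?inE ?(leq_trans le_ij).
have mu1_in : mu1 mu \in mu by case: (mu) mu1_k => //= m s _; rewrite mem_head.
have [j0 /andP[_ le_j0k] g_j0] := mu_kept _ mu1_in.
have g_top : ~~ (g k <= k).
  by rewrite -ltnNge -ltnS -mu1_k -g_j0 ltnS; apply: g_mono; rewrite le_j0k leqnn.
have g_bot : g 0 <= 0 by rewrite /g /kept take0.
have [i [/andP[i_gt0 le_ik] below above]] :=
  @find_switch (fun j => g j <= j) k g_bot g_top.
rewrite -ltnNge in above.
have le_lev : nth 0 (levels a) i.-1 <= nth 0 (levels a) i.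
  by rewrite (lev_leq a_part) ?inE ?leq_pred ?(leq_trans (leq_pred i)).
have wide : rect_x a i != 1.
  rewrite (rect_x_levels a_part) ?i_gt0 //; have := kept_lipschitz c le_lev.
  rewrite -/(g i) -/(g i.-1); move: below above; lia.
have i_mu : i \in mu.
  by apply: contraNT wide => i_notin; rewrite narrow ?i_gt0 ?le_ik.
have [j /andP[_ le_jk] g_j] := mu_kept i i_mu; rewrite -/(g j) in g_j.
case: (ltnP j i) => [lt_ji | le_ij].
  have := g_mono j i.-1; rewrite g_j -ltnS prednK // lt_ji (leq_trans (leq_pred i)) //.
  by move/(_ isT); move: below i_gt0; lia.
by have := g_mono i j; rewrite g_j le_ij le_jk => /(_ isT); move: above; lia.
Qed.

Section Witness.
Variables (a : seq nat) (i : nat).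
Hypothesis a_part : is_partition a.
Local Notation k := (size (undup a)).
Local Notation lev := (nth 0 (levels a)).
Hypothesis i_range : 0 < i <= k.
Hypothesis i_wide : 2 <= lev i - lev i.-1.

(* The column mask keeping the last column of every rectangle of [a] and,
   in the [i]-th rectangle, also the second-to-last column. *)
Definition witness_mask : bitseq :=
  mkseq (fun p => (p.+1 \in a) || (p.+2 == lev i)) (lev k).

Lemma count_last_columns j : j <= k ->
  count (fun p => p.+1 \in a) (iota 0 (lev j)) = j.
Proof.
move=> le_jk; have := count_le_nth_sorted (levels_sorted a_part) (j := j).
rewrite /= size_rev ltnS le_jk add1n => /(_ isT) /succn_inj count_j.
rewrite -[RHS]count_j -count_succ_mem ?rev_uniq ?undup_uniq //; last first.
  by apply/allP => z; rewrite mem_rev mem_undup; apply: part_gt0.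
by apply: eq_count => p; rewrite mem_rev mem_undup.
Qed.

Lemma count_extra_column j : j <= k ->
  count (fun p => p.+2 == lev i) (iota 0 (lev j)) = (i <= j).
Proof.
move=> le_jk; have [i_gt0 le_ik] := andP i_range.
have le_prev : (lev j <= lev i.-1) = (j <= i.-1).
  by rewrite (lev_leq a_part) ?inE ?(leq_trans (leq_pred i)).
rewrite (@eq_count _ _ (pred1 (lev i - 2))) => [|p /=]; last by apply/eqP/eqP; lia.
rewrite count_uniq_mem ?iota_uniq // mem_iota /=.
have := (lev_leq a_part) i j; rewrite !inE le_ik le_jk => /(_ isT isT).
by move: le_prev i_wide i_gt0; lia.
Qed.

(* No column is both a last column and the extra column, since the extra
   column [lev i - 2] lies strictly between [lev i.-1] and [lev i]. *)
Lemma last_extra_disjoint p : p.+1 \in a -> p.+2 != lev i.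
Proof.
move=> /part_is_lev[m /andP[m_gt0 le_mk] lev_m]; have [i_gt0 le_ik] := andP i_range.
apply/eqP => lev_i; have lt_mi : m < i.
  by rewrite -(lev_ltn a_part) ?inE // lev_m -lev_i.
have : lev m <= lev i.-1.
  by rewrite (lev_leq a_part) ?inE ?(leq_trans (leq_pred i)) // -ltnS prednK.
by move: i_wide; rewrite lev_m -lev_i; lia.
Qed.

Lemma kept_witness j : j <= k -> kept witness_mask (lev j) = j + (i <= j).
Proof.
move=> le_jk; have le_top : lev j <= lev k by rewrite (lev_leq a_part) ?inE.
rewrite /kept /witness_mask /mkseq -map_take take_iota (minn_idPl le_top) count_map.
rewrite -[X in _ + X](count_extra_column le_jk) -[X in X + _](count_last_columns le_jk).
rewrite -count_predUI.
have no_overlap : predI (fun p => p.+1 \in a) (fun p => p.+2 == lev i) =1 pred0.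
  by move=> p /=; case: (boolP (p.+1 \in a)) => // /last_extra_disjoint /negbTE.
by rewrite (eq_count no_overlap) count_pred0 addn0.
Qed.

Lemma witness_incr z1 z2 : z1 \in a -> z2 \in a -> z1 < z2 ->
  kept witness_mask z1 < kept witness_mask z2.
Proof.
move=> /part_is_lev[j1 /andP[_ le_j1] <-] /part_is_lev[j2 /andP[_ le_j2] <-].
rewrite (lev_ltn a_part) ?inE // => lt_12.
by rewrite !kept_witness //; case: (leqP i j1); case: (leqP i j2) => /= *; lia.
Qed.

Lemma witness_onto v : 0 < v <= k.+1 -> v != i ->
  exists2 z, z \in a & kept witness_mask z = v.
Proof.
move=> /andP[v_gt0 le_vk] v_i; pose j := if v < i then v else v.-1.
have [i_gt0 le_ik] := andP i_range.
have j_range : 0 < j <= k by rewrite /j; case: (@ltnP v i) => *; move: v_i; lia.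
exists (lev j); first exact: lev_in_part.
rewrite kept_witness ?(andP j_range).2 // /j.
by case: (@ltnP v i) => *; case: (@leqP i) => * /=; move: v_i; lia.
Qed.

End Witness.

Lemma contains_of_wide a mu i : is_partition a -> is_strict mu ->
  mu1 mu = (size (undup a)).+1 -> 0 < i <= size (undup a) -> i \notin mu ->
  rect_x a i != 1 -> contains a mu.
Proof.
move=> a_part mu_strict mu1_k i_range i_mu wide.
have [i_gt0 le_ik] := andP i_range.
have i_wide : 2 <= nth 0 (levels a) i - nth 0 (levels a) i.-1.
  have : nth 0 (levels a) i.-1 < nth 0 (levels a) i.
    by rewrite (lev_ltn a_part) ?inE ?prednK ?(leq_trans (leq_pred i)).
  by move/eqP: wide; rewrite (rect_x_levels a_part) //; lia.
set g := kept (witness_mask a i).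
have mu_part := strict_is_partition mu_strict.
pose rows := [seq z <- undup a | g z \in mu].
have /subseqP[r _ rows_r] : subseq rows a.
  exact: subseq_trans (filter_subseq _ _) (undup_subseq a).
exists r, (witness_mask a i); rewrite -rows_r (all_filterP _); last first.
  by apply/allP => n /mapP[z]; rewrite mem_filter => /andP[g_mu _] ->; apply: part_gt0 g_mu.
apply: (irr_sorted_eq gtn_trans ltnn); last first.
- move=> v; apply/mapP/idP => [[z] | v_mu]; first by rewrite mem_filter => /andP[? _] ->.
  have v_range : 0 < v <= (size (undup a)).+1.
    by rewrite (part_gt0 mu_part) // -mu1_k (part_le_head mu_part).
  have v_i : v != i by apply: contraNneq i_mu => <-.
  have [z z_a g_z] := witness_onto a_part i_range i_wide v_range v_i.
  by exists z; rewrite // mem_filter mem_undup z_a /g g_z v_mu.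
- by case/andP: mu_strict.
apply: (@homo_sorted_in _ _ (mem a)).
- by move=> z1 z2 z1_a z2_a; apply: witness_incr.
- by apply/allP => z; rewrite mem_filter mem_undup => /andP[].
apply: (subseq_sorted gtn_trans (filter_subseq _ _)).
rewrite gtn_sorted_uniq_geq undup_uniq /=.
by apply: (subseq_sorted geq_trans (undup_subseq a)); case/andP: a_part.
Qed.

Theorem mainTheorem13 (mu : seq nat) :
  is_strict mu -> 2 <= mu1 mu ->
  forall a : seq nat,
    in_D mu a <->
    [/\ is_partition a, ndistinct a = (mu1 mu).-1 &
        forall i : nat, 1 <= i <= (mu1 mu).-1 -> i \notin mu -> rect_x a i = 1].
Proof.
move=> mu_strict mu1_ge2 a.
have mu1_k : is_partition a -> ndistinct a = (mu1 mu).-1 ->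
    mu1 mu = (size (undup a)).+1.
  by move=> a_part; rewrite (ndistinct_levels a_part) => ->; rewrite prednK // ltnW.
split.
- case=> a_part _ a_avoids nd_a; split=> // i i_range i_mu.
  rewrite -nd_a (ndistinct_levels a_part) in i_range.
  apply/eqP; apply: contraT => wide; case: a_avoids.
  exact: contains_of_wide a_part mu_strict (mu1_k a_part nd_a) i_range i_mu wide.
- case=> a_part nd_a narrow; split=> //.
    by rewrite weight_gt0 // nd_a -ltnS prednK // ltnW.
  apply: (avoids_of_narrow a_part (mu1_k a_part nd_a)) => i i_range.
  by apply: narrow; rewrite -nd_a (ndistinct_levels a_part).
Qed.
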